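(* Let $K,T\subset\mathbb{R}^n$ be convex bodies, where $T$ is strictly convex and smooth, and let $q=(q_1,\dots,q_m)$ be a closed $(K,T)$-Minkowski billiard trajectory. Then for every $j\in\{1,\dots,m\}$ there is exactly one $K$-supporting hyperplane $H_j$ through $q_j$ such that $q_j$ minimizes $\bar q\mapsto\mu_{T^\circ}(\bar q-q_{j-1})+\mu_{T^\circ}(q_{j+1}-\bar q)$ over all $\bar q\in H_j$.
   Context: A convex body is a compact convex set in $\mathbb{R}^n$ containing the origin in its interior; it is smooth if through each boundary point there is a unique supporting hyperplane. For a convex body $T$, $T^\circ$ is its polar body and $\mu_{T^\circ}(x)=\min\{t\ge 0: x\in tT^\circ\}$. For a convex set $C$ and $z\in\partial C$, $N_C(z)=\{v:\langle v,y-z\rangle\le 0\ \forall y\in C\}$. A closed polygonal curve $(q_1,\dots,q_m)$, $m\ge2$, always satisfies $q_j\ne q_{j+1}$ and $q_j\notin[q_{j-1},q_{j+1}]$ (indices mod $m$). A closed polygonal curve $q$ with vertices on $\partial K$ is a closed $(K,T)$-Minkowski billiard trajectory if there are $p_1,\dots,p_m\in\partial T$ with $q_{j+1}-q_j\in N_T(p_j)$ and $p_{j+1}-p_j\in -N_K(q_{j+1})$ for all $j$. *)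

From HB Require Import structures.
From mathcomp Require Import all_boot all_order all_algebra.
From mathcomp Require Import all_classical all_reals all_analysis.
Set Implicit Arguments. Unset Strict Implicit. Unset Printing Implicit Defensive.
Import Order.TTheory GRing.Theory Num.Theory.
Import numFieldNormedType.Exports.
Local Open Scope classical_set_scope.
Local Open Scope ring_scope.

Section Defs.
Variables (R : realType) (n : nat).
Notation V := 'rV[R]_n.

Definition dotp (u v : V) : R := \sum_(i < n) u 0 i * v 0 i.

Definition convex_set (C : set V) : Prop :=
  forall x y t, C x -> C y -> 0 <= t <= 1 -> C (t *: x + (1 - t) *: y).

Definition convex_body (C : set V) : Prop :=
  [/\ convex_set C, compact C & (interior C) 0].

Definition bd (C : set V) : set V := closure C `\` interior C.

Definition strictly_convex (C : set V) : Prop :=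
  forall x y t, C x -> C y -> x != y -> 0 < t < 1 ->
    (interior C) (t *: x + (1 - t) *: y).

Definition supporting_hyperplane (C : set V) (z : V) (H : set V) : Prop :=
  exists v : V, [/\ v != 0, H = [set y | dotp v y = dotp v z]
                   & forall y, C y -> dotp v y <= dotp v z].

Definition smooth (C : set V) : Prop :=
  forall z, bd C z -> exists! H, supporting_hyperplane C z H.

Definition polar (C : set V) : set V :=
  [set y | forall x, C x -> dotp x y <= 1].

Definition scale_set (t : R) (C : set V) : set V := [set t *: y | y in C].

Definition gauge (C : set V) (x : V) : R :=
  inf [set t : R | 0 <= t /\ scale_set t C x].

Definition normal_cone (C : set V) (z : V) : set V :=
  [set v | forall y, C y -> dotp v (y - z) <= 0].

Definition in_segment (a b x : V) : Prop :=
  exists2 t : R, 0 <= t <= 1 & x = (1 - t) *: a + t *: b.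

(* closed polygonal curve (q_1,...,q_m), indices mod m *)
Definition closed_polygonal_curve (m : nat) (q : 'I_m -> V) : Prop :=
  (2 <= m)%N /\
  forall j : 'I_m, q j != q (ordS j) /\
                   ~ in_segment (q (ord_pred j)) (q (ordS j)) (q j).

Definition minkowski_billiard_trajectory (K T : set V) (m : nat)
    (q : 'I_m -> V) : Prop :=
  [/\ closed_polygonal_curve q,
      forall j, bd K (q j) &
      exists p : 'I_m -> V,
        (forall j, bd T (p j)) /\
        forall j : 'I_m,
          normal_cone T (p j) (q (ordS j) - q j) /\
          normal_cone K (q (ordS j)) (- (p (ordS j) - p j))].

End Defs.

(* The gauge of T° is the support function of T, so at a billiard vertex q_j the
   path length F(y) = mu(y - q_{j-1}) + mu(q_{j+1} - y) is bounded below by the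
   affine function F(q_j) + <p_{j-1} - p_j, y - q_j>, with equality at q_j: the
   hyperplane through q_j orthogonal to v = p_{j-1} - p_j, which supports K by the
   reflection rule, is minimizing.  Strict convexity of T makes its support
   function differentiable in the normal directions, so v is in fact the gradient
   of F at q_j; on any other hyperplane through q_j some direction e with
   <v, e> > 0 is available, along which F strictly decreases.  Finally v <> 0:
   otherwise smoothness of T forces q_j - q_{j-1} and q_{j+1} - q_j to be
   positively parallel, making q_j lie on the segment [q_{j-1}, q_{j+1}]. *)
From HB Require Import structures.
From mathcomp Require Import all_boot all_order all_algebra.
From mathcomp Require Import all_classical all_reals all_analysis.
From mathcomp Require Import ring lra.
Set Implicit Arguments. Unset Strict Implicit. Unset Printing Implicit Defensive.
Import Order.TTheory GRing.Theory Num.Theory.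
Import numFieldNormedType.Exports.
Local Open Scope classical_set_scope.
Local Open Scope ring_scope.

Section InnerProduct.
Variables (R : realType) (n : nat).
Notation V := 'rV[R]_n.
Implicit Types (u v w : V).

Lemma dotpC u v : dotp u v = dotp v u.
Proof. by apply: eq_bigr => i _; rewrite mulrC. Qed.

Lemma dotpDl u v w : dotp (u + v) w = dotp u w + dotp v w.
Proof. by rewrite /dotp -big_split; apply: eq_bigr => i _; rewrite mxE mulrDl. Qed.

Lemma dotpZl (a : R) u w : dotp (a *: u) w = a * dotp u w.
Proof. by rewrite /dotp mulr_sumr; apply: eq_bigr => i _; rewrite mxE mulrA. Qed.

Lemma dotpNl u w : dotp (- u) w = - dotp u w.
Proof. by rewrite -scaleN1r dotpZl mulN1r. Qed.

Lemma dotpBl u v w : dotp (u - v) w = dotp u w - dotp v w.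
Proof. by rewrite dotpDl dotpNl. Qed.

Lemma dotpDr u v w : dotp w (u + v) = dotp w u + dotp w v.
Proof. by rewrite !(dotpC w) dotpDl. Qed.

Lemma dotpZr (a : R) u w : dotp w (a *: u) = a * dotp w u.
Proof. by rewrite !(dotpC w) dotpZl. Qed.

Lemma dotpNr u w : dotp w (- u) = - dotp w u.
Proof. by rewrite !(dotpC w) dotpNl. Qed.

Lemma dotpBr u v w : dotp w (u - v) = dotp w u - dotp w v.
Proof. by rewrite dotpDr dotpNr. Qed.

Lemma dotpp_gt0 u : u != 0 -> 0 < dotp u u.
Proof.
have sq_ge0 i : 0 <= u 0 i * u 0 i by rewrite -expr2 sqr_ge0.
move=> u0; rewrite lt_def sumr_ge0 // andbT; apply: contra u0.
rewrite psumr_eq0 // => /allP u_eq0; apply/eqP/rowP => i.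
by have := u_eq0 i (mem_index_enum i); rewrite mxE /= -expr2 sqrf_eq0 => /eqP.
Qed.

Lemma normr_dotp_le u v : `|dotp u v| <= n%:R * (`|u| * `|v|).
Proof.
have coord_le_norm w i : `|w 0 i| <= `|w|.
  rewrite [leRHS]/Num.Def.normr /= mx_normrE; apply/bigmax_geP; right => /=.
  by exists (ord0, i) => //=; rewrite [0]ord1.
apply: (le_trans (ler_norm_sum _ _ _)).
have -> : n%:R * (`|u| * `|v|) = \sum_(i < n) (`|u| * `|v|).
  by rewrite sumr_const card_ord mulr_natl.
by apply: ler_sum => i _; rewrite normrM ler_pM ?coord_le_norm.
Qed.

Lemma dotp_continuous u : continuous (dotp u).
Proof.
move=> x A /nbhs_ballP [e /= e0 eA]; apply/nbhs_ballP.
have k0 : 0 < n%:R * `|u| + 1 by rewrite ltr_wpDl ?mulr_ge0.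
exists (e / (n%:R * `|u| + 1)); first exact: divr_gt0.
move=> y; rewrite -ball_normE /= => xy; apply: eA; rewrite -ball_normE /=.
rewrite -dotpBr; apply: (le_lt_trans (normr_dotp_le _ _)).
rewrite mulrA; apply: (le_lt_trans (y := (n%:R * `|u| + 1) * `|x - y|)).
  by rewrite ler_wpM2r // lerDl.
by rewrite mulrC -ltr_pdivlMr.
Qed.

Lemma parallel_or_orthogonal_witness v w : w != 0 ->
  (exists c, v = c *: w) \/ (exists e, dotp w e = 0 /\ 0 < dotp v e).
Proof.
move=> w0; pose c := dotp w v / dotp w w.
have ww0 : dotp w w != 0 by rewrite gt_eqF // dotpp_gt0.
pose e := v - c *: w.
have we : dotp w e = 0 by rewrite /e dotpBr dotpZr /c mulfVK // subrr.
have [e0|e0] := eqVneq e 0.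
  by left; exists c; apply/eqP; rewrite -subr_eq0 -/e e0.
right; exists e; split => //.
have -> : v = e + c *: w by rewrite /e subrK.
by rewrite dotpDl dotpZl we mulr0 addr0 dotpp_gt0.
Qed.

Lemma in_segment_forward (a b z : V) c :
  0 < c -> b - z = c *: (z - a) -> in_segment a b z.
Proof.
move=> c0 bz; exists (1 + c)^-1.
  apply/andP; split; first by rewrite invr_ge0 addr_ge0 // ltW.
  by rewrite invf_le1 ?ltr_pwDr // lerDl ltW.
apply/rowP => i; have := congr1 (fun M : V => M 0 i) bz; rewrite !mxE => bz_i.
have -> : b 0 i = z 0 i + c * (z 0 i - a 0 i) by rewrite -bz_i subrKC.
by field; rewrite gt_eqF //; lra.
Qed.

End InnerProduct.

Section NormalCone.
Variables (R : realType) (n : nat).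
Notation V := 'rV[R]_n.
Variable C : set V.
Implicit Types (p x y d : V).

Lemma normal_coneP p x : normal_cone C p x <-> forall y, C y -> dotp x y <= dotp x p.
Proof.
by split=> Nx y /Nx; rewrite dotpBr subr_le0.
Qed.

Lemma interior_ball x : interior C x ->
  exists2 e : R, 0 < e & forall y, `|x - y| < e -> C y.
Proof.
by move=> /nbhs_ballP [e /= e0 eA]; exists e => // y xy; apply: eA; rewrite -ball_normE.
Qed.

Lemma interior_step x y : interior C y -> x != 0 ->
  exists2 s : R, 0 < s & C (y + s *: x).
Proof.
move=> /interior_ball [e e0 Ce] x0; have nx : 0 < `|x| by rewrite normr_gt0.
exists (e / (2 * `|x|)); first by rewrite divr_gt0 // mulr_gt0.
apply: Ce; rewrite opprD addrA subrr sub0r normrN normrZ gtr0_norm ?divr_gt0 ?mulr_gt0 //.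
have -> : e / (2 * `|x|) * `|x| = e / 2 by field; rewrite gt_eqF.
lra.
Qed.

Lemma compact_dotp_ub d : compact C -> exists B, forall y, C y -> dotp d y <= B.
Proof.
move=> /compact_bounded /ex_strict_bound_gt0 [M M0 CM].
exists (n%:R * (`|d| * M)) => y Cy.
apply: (le_trans (ler_norm _)); apply: (le_trans (normr_dotp_le _ _)).
by rewrite ler_wpM2l // ler_wpM2l // ltW ?CM.
Qed.

Lemma compact_bd_sub p : compact C -> bd C p -> C p.
Proof.
move=> cC [Cp _]; have : closed C := compact_closed (@norm_hausdorff _ _) cC.
by move=> /closure_id ->.
Qed.

Lemma normal_cone_dotp_gt0 p x : interior C 0 -> x != 0 -> normal_cone C p x ->
  0 < dotp x p.
Proof.
move=> iC x0 /normal_coneP Nx; have [s s0] := interior_step iC x0.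
rewrite add0r => /Nx; rewrite dotpZr; apply: lt_le_trans.
by rewrite mulr_gt0 ?dotpp_gt0.
Qed.

Lemma strictly_convex_normal_face p x y : strictly_convex C -> C p -> C y ->
  x != 0 -> normal_cone C p x -> dotp x y = dotp x p -> y = p.
Proof.
move=> sC Cp Cy x0 /normal_coneP Nx xy; apply/eqP; apply: contraT => yp.
have half : 0 < (2^-1 : R) < 1 by apply/andP; split; lra.
have [s s0 /Nx] := interior_step (sC _ _ _ Cy Cp yp half) x0.
rewrite !(dotpDr, dotpZr) xy.
have : 0 < s * dotp x x by rewrite mulr_gt0 // dotpp_gt0.
lra.
Qed.

Lemma smooth_normal_cone_ray p x1 x2 : interior C 0 -> smooth C -> bd C p ->
  x1 != 0 -> x2 != 0 -> normal_cone C p x1 -> normal_cone C p x2 ->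
  exists2 c : R, 0 < c & x2 = c *: x1.
Proof.
move=> iC smC bp x1_0 x2_0 N1 N2.
have supp x : x != 0 -> normal_cone C p x ->
    supporting_hyperplane C p [set y | dotp x y = dotp x p].
  by move=> x0 /normal_coneP Nx; exists x.
have [H [_ H_uniq]] := smC _ bp.
have hyp12 : [set y | dotp x1 y = dotp x1 p] = [set y | dotp x2 y = dotp x2 p].
  by rewrite -(H_uniq _ (supp _ x1_0 N1)) -(H_uniq _ (supp _ x2_0 N2)).
have [[c x2E]|[e [x1e x2e]]] := parallel_or_orthogonal_witness x2 x1_0.
  exists c => //; have := normal_cone_dotp_gt0 iC x2_0 N2.
  by rewrite x2E dotpZl pmulr_lgt0 // normal_cone_dotp_gt0.
have : [set y | dotp x1 y = dotp x1 p] (p + e) by rewrite /= dotpDr x1e addr0.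
by rewrite hyp12 /= dotpDr; lra.
Qed.

End NormalCone.

Section SupportFunction.
Variables (R : realType) (n : nat).
Notation V := 'rV[R]_n.
Variable C : set V.
Implicit Types (p x y d : V).

Lemma gauge_polar_ge x p : compact C -> C p -> dotp x p <= gauge (polar C) x.
Proof.
move=> cC Cp; have [B CB] := compact_dotp_ub x cC.
have B1 : 0 < `|B| + 1 by rewrite ltr_pwDr.
apply: lb_le_inf.
  exists (`|B| + 1); split; first exact: ltW.
  exists ((`|B| + 1)^-1 *: x); last by rewrite scalerA mulfV ?scale1r ?gt_eqF.
  move=> y Cy; rewrite dotpZr dotpC ler_pdivrMl // mulr1.
  by rewrite (le_trans (CB _ Cy)) // (le_trans (ler_norm _)) // lerDl.
move=> t [t0 [y Py <-]]; rewrite dotpZl dotpC -[leRHS]mulr1.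
by rewrite ler_wpM2l // Py.
Qed.

Lemma gauge_polar_le x s : 0 < s -> (forall y, C y -> dotp x y <= s) ->
  gauge (polar C) x <= s.
Proof.
move=> s0 Cs; apply: ge_inf; first by exists 0 => t [].
split; first exact: ltW.
exists (s^-1 *: x); last by rewrite scalerA mulfV ?scale1r // gt_eqF.
by move=> y Cy; rewrite dotpZr dotpC ler_pdivrMl // mulr1 Cs.
Qed.

Lemma gauge_polar_normal x p : compact C -> interior C 0 -> C p -> x != 0 ->
  normal_cone C p x -> gauge (polar C) x = dotp x p.
Proof.
move=> cC iC Cp x0 Nx; apply/eqP; rewrite eq_le gauge_polar_ge // andbT.
by apply: gauge_polar_le; [exact: normal_cone_dotp_gt0 Nx|exact/normal_coneP].
Qed.

Section StrictlyConvex.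
Hypotheses (cC : compact C) (iC : interior C 0) (sC : strictly_convex C).
Variables (p x : V).
Hypotheses (Cp : C p) (x0 : x != 0) (Nx : normal_cone C p x).

(* By compactness, points of C away from p in direction d stay uniformly below
   the level of the face {p}. *)
Lemma normal_cone_gap d eps : 0 < eps -> exists2 del : R, 0 < del &
  forall y, C y -> dotp d p + eps <= dotp d y -> dotp x y <= dotp x p - del.
Proof.
move=> eps0; pose D := C `&` (dotp d @^-1` [set r | dotp d p + eps <= r]).
have [[y0 Dy0]|D0] := pselect (D !=set0); last first.
  by exists 1 => // y Cy dy; exfalso; apply: D0; exists y.
have cD : compact D.
  apply: compact_closedI => //; apply: preimage_closed; last exact: closed_ge.
  by move=> z _; apply: dotp_continuous.
have [c /set_mem [Cc Dc] c_max] := @compact_EVT_max _ _ (dotp x) D (ex_intro _ y0 Dy0)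
  cD (@continuous_subspaceT _ _ D (dotp x) (@dotp_continuous _ _ x)).
exists (dotp x p - dotp x c).
  rewrite subr_gt0 lt_def (normal_coneP C p x).1 // andbT.
  apply/eqP => /esym xc; have cp := strictly_convex_normal_face sC Cp Cc x0 Nx xc.
  by move: Dc; rewrite /= cp; lra.
by move=> y Cy dy; have := c_max y (mem_set (conj Cy dy)); lra.
Qed.

Lemma gauge_polar_directional_le d eps : 0 < eps ->
  exists2 t0 : R, 0 < t0 & forall t, 0 < t -> t <= t0 ->
    gauge (polar C) (x + t *: d) <= dotp x p + t * (dotp d p + eps).
Proof.
move=> eps0; have xp0 := normal_cone_dotp_gt0 iC x0 Nx.
have [B CB] := compact_dotp_ub d cC.
have [del del0 gap] := normal_cone_gap d eps0.
pose a := `|B - dotp d p| + 1; pose b := `|dotp d p + eps| + 1.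
have a0 : 0 < a by rewrite ltr_pwDr.
have b0 : 0 < b by rewrite ltr_pwDr.
exists (Num.min (del / a) (dotp x p / b)); first by rewrite lt_min !divr_gt0.
move=> t t0; rewrite le_min !ler_pdivlMr // => /andP [ta tb].
have na : t * (B - dotp d p) <= t * `|B - dotp d p| by rewrite ler_pM2l // ler_norm.
have nb : t * - (dotp d p + eps) <= t * `|dotp d p + eps|.
  by rewrite ler_pM2l // -normrN ler_norm.
apply: gauge_polar_le; first by move: tb nb; rewrite /b; nra.
move=> y Cy; rewrite dotpDl dotpZl.
have xy := (normal_coneP C p x).1 Nx y Cy.
have [dy|dy] := leP (dotp d p + eps) (dotp d y).
  have := gap _ Cy dy; have : t * dotp d y <= t * B by rewrite ler_pM2l // CB.
  by move: ta na; rewrite /a; nra.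
have : t * dotp d y <= t * (dotp d p + eps) by rewrite ler_pM2l // ltW.
nra.
Qed.

End StrictlyConvex.
End SupportFunction.

Section MinimizingHyperplane.
Variables (R : realType) (n : nat).
Notation V := 'rV[R]_n.

(* A nonzero subgradient v of f at b that is also a gradient (f strictly
   decreases along every e with <v, e> > 0) singles out one minimizing hyperplane. *)
Lemma unique_minimizing_hyperplane (K : set V) (f : V -> R) (b v : V) :
  v != 0 -> normal_cone K b v ->
  (forall y, dotp v y = dotp v b -> f b <= f y) ->
  (forall e, 0 < dotp v e -> exists t : R, f (b - t *: e) < f b) ->
  exists! H : set V,
    supporting_hyperplane K b H /\ forall y, H y -> f b <= f y.
Proof.
move=> v0 /normal_coneP Nv f_min f_descent.
exists [set y | dotp v y = dotp v b]; split.
  by split; [exists v; split|exact: f_min].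
move=> H [[w [w0 -> _]] H_min].
have [[c vE]|[e [we ve]]] := parallel_or_orthogonal_witness v w0.
  have c0 : c != 0 by apply: contraNneq v0 => c0; rewrite vE c0 scale0r.
  by apply/seteqP; split => y /=; rewrite vE !dotpZl; [move/(mulfI c0) | move=> ->].
have [t ft] := f_descent e ve.
have := H_min (b - t *: e); rewrite /= dotpBr dotpZr we mulr0 subr0 => /(_ erefl).
by rewrite leNgt ft.
Qed.

End MinimizingHyperplane.

Section BilliardVertex.
Variables (R : realType) (n : nat).
Notation V := 'rV[R]_n.
Variables (T : set V) (a b c pa pb : V).
Hypotheses (cT : compact T) (iT : interior T 0) (sT : strictly_convex T).
Hypotheses (Tpa : T pa) (Tpb : T pb) (ab : b - a != 0) (bc : c - b != 0).
Hypotheses (Na : normal_cone T pa (b - a)) (Nb : normal_cone T pb (c - b)).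

Definition path_length (y : V) :=
  gauge (polar T) (y - a) + gauge (polar T) (c - y).

Lemma path_length_vertex : path_length b = dotp (b - a) pa + dotp (c - b) pb.
Proof.
by rewrite /path_length (gauge_polar_normal cT iT Tpa ab Na) (gauge_polar_normal cT iT Tpb bc Nb).
Qed.

Lemma path_length_subgradient y :
  path_length b + dotp (pa - pb) (y - b) <= path_length y.
Proof.
rewrite path_length_vertex /path_length.
have := gauge_polar_ge (y - a) cT Tpa; have := gauge_polar_ge (c - y) cT Tpb.
rewrite !(dotpBl, dotpBr) ![dotp pa _]dotpC ![dotp pb _]dotpC; lra.
Qed.

Lemma path_length_descent e : 0 < dotp (pa - pb) e ->
  exists t : R, path_length (b - t *: e) < path_length b.
Proof.
move=> ve; pose eps := dotp (pa - pb) e / 4.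
have eps0 : 0 < eps by rewrite divr_gt0.
have [t1 t1_0 ga] := gauge_polar_directional_le cT iT sT Tpa ab Na (- e) eps0.
have [t2 t2_0 gb] := gauge_polar_directional_le cT iT sT Tpb bc Nb e eps0.
pose t := Num.min t1 t2; have t0 : 0 < t by rewrite lt_min t1_0 t2_0.
have {}ga := ga t t0 (ltac:(by rewrite ge_min lexx)).
have {}gb := gb t t0 (ltac:(by rewrite ge_min lexx orbT)).
exists t; rewrite path_length_vertex /path_length.
have -> : b - t *: e - a = b - a + t *: - e by rewrite scalerN addrAC.
have -> : c - (b - t *: e) = c - b + t *: e by rewrite opprB addrA addrAC.
move: ga gb; have := mulr_gt0 t0 ve.
rewrite /eps !(dotpNl, dotpBl) ![dotp pa _]dotpC ![dotp pb _]dotpC; nra.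
Qed.

End BilliardVertex.

Theorem proposition3p3 (R : realType) (n : nat) (K T : set 'rV[R]_n)
  (m : nat) (q : 'I_m -> 'rV[R]_n) :
  convex_body K -> convex_body T -> strictly_convex T -> smooth T ->
  minkowski_billiard_trajectory K T q ->
  forall j : 'I_m,
    exists! H : set 'rV[R]_n,
      supporting_hyperplane K (q j) H /\
      forall qb, H qb ->
        gauge (polar T) (q j - q (ord_pred j)) + gauge (polar T) (q (ordS j) - q j)
        <= gauge (polar T) (qb - q (ord_pred j)) + gauge (polar T) (q (ordS j) - qb).
Proof.
move=> _ [_ cT iT] sT smT [[_ curve] bdK [p [bdT refl]]] j.
have jmS : ordS (ord_pred j) = j := ord_predK j.
have Tp k : T (p k) := compact_bd_sub cT (bdT k).
have [Na NK] := refl (ord_pred j); have [Nb _] := refl j; rewrite jmS opprB in Na NK.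
have ab : q j - q (ord_pred j) != 0.
  by rewrite subr_eq0 eq_sym -{2}jmS; case: (curve (ord_pred j)).
have bc : q (ordS j) - q j != 0 by rewrite subr_eq0 eq_sym; case: (curve j).
have v0 : p (ord_pred j) - p j != 0.
  rewrite subr_eq0; apply/eqP => pE; apply: (curve j).2; rewrite pE in Na.
  have [c c0 cE] := smooth_normal_cone_ray iT smT (bdT j) ab bc Na Nb.
  exact: in_segment_forward c0 cE.
apply: unique_minimizing_hyperplane v0 NK _ _.
- move=> y vy; have := path_length_subgradient cT iT (Tp _) (Tp j) ab bc Na Nb y.
  by rewrite dotpBr vy subrr addr0.
- exact: path_length_descent.
Qed.
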